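(* Let $M$ be a countable LA-structure which is a model of $\forall_1$-$Th(\mathbb{N})$ (the set of all universal LA-sentences true in $\mathbb{N}$). Then $M$ can be embedded (as an LA-structure) into the reduced power $\mathbb{N}^{\omega}/\mathcal{F}$, where $\mathcal{F}$ is the cofinite filter on $\omega$.
   Context: LA is the first-order language with non-logical symbols $+,\cdot,0,1,\leq$; $\mathbb{N}$ is the standard LA-structure. The reduced power $\mathbb{N}^\omega/\mathcal{F}$ has as elements the classes of functions $f:\omega\to\mathbb{N}$ modulo agreement on a cofinite set, with $+,\cdot$ defined pointwise, $0,1$ the classes of constant functions, and $[f]\le[g]$ iff $f(n)\le g(n)$ for all but finitely many $n$. An embedding is an injective map preserving $0,1,+,\cdot$ and $\leq$. *)

From Stdlib Require Import Arith PeanoNat.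

(** * LA-structures (equality is interpreted as Leibniz equality) *)
Record LAStructure := {
  carrier :> Type;
  s_add : carrier -> carrier -> carrier;
  s_mul : carrier -> carrier -> carrier;
  s_zero : carrier;
  s_one : carrier;
  s_le : carrier -> carrier -> Prop
}.

Definition NatStr : LAStructure :=
  {| carrier := nat; s_add := Nat.add; s_mul := Nat.mul;
     s_zero := 0; s_one := 1; s_le := le |}.

Inductive term : Type :=
  | tvar : nat -> term
  | tzero : term
  | tone : term
  | tadd : term -> term -> term
  | tmul : term -> term -> term.

Inductive formula : Type :=
  | fEq : term -> term -> formula
  | fLe : term -> term -> formula
  | fFalse : formula
  | fNot : formula -> formula
  | fAnd : formula -> formula -> formula
  | fOr : formula -> formula -> formula
  | fImp : formula -> formula -> formula
  | fAll : nat -> formula -> formula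
  | fEx : nat -> formula -> formula.

Fixpoint occurs (x : nat) (t : term) : Prop :=
  match t with
  | tvar y => x = y
  | tzero | tone => False
  | tadd a b | tmul a b => occurs x a \/ occurs x b
  end.

Fixpoint free_in (x : nat) (f : formula) : Prop :=
  match f with
  | fEq a b | fLe a b => occurs x a \/ occurs x b
  | fFalse => False
  | fNot g => free_in x g
  | fAnd g h | fOr g h | fImp g h => free_in x g \/ free_in x h
  | fAll y g | fEx y g => x <> y /\ free_in x g
  end.

Definition sentence (f : formula) : Prop := forall x, ~ free_in x f.

Fixpoint qfree (f : formula) : Prop :=
  match f with
  | fEq _ _ | fLe _ _ | fFalse => True
  | fNot g => qfree g
  | fAnd g h | fOr g h | fImp g h => qfree g /\ qfree h
  | fAll _ _ | fEx _ _ => False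
  end.

Inductive universal : formula -> Prop :=
  | univ_qf : forall f, qfree f -> universal f
  | univ_all : forall x f, universal f -> universal (fAll x f).

Definition upd {M : Type} (v : nat -> M) (x : nat) (a : M) : nat -> M :=
  fun y => if Nat.eqb y x then a else v y.

Fixpoint teval (M : LAStructure) (v : nat -> M) (t : term) : M :=
  match t with
  | tvar x => v x
  | tzero => s_zero M
  | tone => s_one M
  | tadd a b => s_add M (teval M v a) (teval M v b)
  | tmul a b => s_mul M (teval M v a) (teval M v b)
  end.

Fixpoint sat (M : LAStructure) (v : nat -> M) (f : formula) : Prop :=
  match f with
  | fEq a b => teval M v a = teval M v b
  | fLe a b => s_le M (teval M v a) (teval M v b)
  | fFalse => False
  | fNot g => ~ sat M v g
  | fAnd g h => sat M v g /\ sat M v h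
  | fOr g h => sat M v g \/ sat M v h
  | fImp g h => sat M v g -> sat M v h
  | fAll x g => forall a : M, sat M (upd v x a) g
  | fEx x g => exists a : M, sat M (upd v x a) g
  end.

(** Truth of a sentence (valuation-independent for sentences). *)
Definition models (M : LAStructure) (f : formula) : Prop :=
  forall v : nat -> M, sat M v f.

Definition models_univ_th_N (M : LAStructure) : Prop :=
  forall f, universal f -> sentence f -> models NatStr f -> models M f.

Definition countable (M : LAStructure) : Prop :=
  exists enc : M -> nat, forall a b, enc a = enc b -> a = b.

(** * The reduced power N^omega / F, F the cofinite filter on omega.
    Elements are represented by functions nat -> nat; two represent the same
    class iff they agree on a cofinite set (i.e. eventually). *)
Definition cofinitely (P : nat -> Prop) : Prop :=
  exists N, forall n, N <= n -> P n.

Definition rp_eq (f g : nat -> nat) : Prop := cofinitely (fun n => f n = g n).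
Definition rp_le (f g : nat -> nat) : Prop := cofinitely (fun n => f n <= g n).
Definition rp_add (f g : nat -> nat) : nat -> nat := fun n => f n + g n.
Definition rp_mul (f g : nat -> nat) : nat -> nat := fun n => f n * g n.
Definition rp_zero : nat -> nat := fun _ => 0.
Definition rp_one : nat -> nat := fun _ => 1.

(** An LA-embedding of M into N^omega/F, given by choosing a representative
    h a of the class assigned to each a : M. *)
Definition embeds_into_reduced_power (M : LAStructure) : Prop :=
  exists h : M -> (nat -> nat),
    (forall a b, rp_eq (h a) (h b) -> a = b) /\
    rp_eq (h (s_zero M)) rp_zero /\
    rp_eq (h (s_one M)) rp_one /\
    (forall a b, rp_eq (h (s_add M a b)) (rp_add (h a) (h b))) /\
    (forall a b, rp_eq (h (s_mul M a b)) (rp_mul (h a) (h b))) /\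
    (forall a b, s_le M a b <-> rp_le (h a) (h b)).

(* Enumerate M as e 0, e 1, ...  For each n, the literals over the first n
   elements that hold in M (x_i = x_j, x_i <= x_j, x_i = 0, x_i = 1,
   x_k = x_i + x_j, x_k = x_i * x_j) form a quantifier-free formula satisfied
   in M.  Its negation, universally closed, is a universal sentence false in M,
   hence false in N; so some tuple w_n of naturals satisfies the same literals.
   Sending a to the sequence n |-> w_n (index of a) then makes each atomic
   fact about elements of M hold in every coordinate n beyond their indices,
   i.e. cofinitely, and an atomic fact holding cofinitely must hold in M. *)

From Stdlib Require Import PeanoNat List Lia ClassicalEpsilon FunctionalExtensionality.
Import ListNotations.

Fixpoint tbound (t : term) : nat :=
  match t with
  | tvar x => S x
  | tzero | tone => 0
  | tadd a b | tmul a b => max (tbound a) (tbound b)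
  end.

Fixpoint fbound (f : formula) : nat :=
  match f with
  | fEq a b | fLe a b => max (tbound a) (tbound b)
  | fFalse => 0
  | fNot g => fbound g
  | fAnd g h | fOr g h | fImp g h => max (fbound g) (fbound h)
  | fAll _ g | fEx _ g => fbound g
  end.

Lemma occurs_lt_tbound x t : occurs x t -> x < tbound t.
Proof.
  induction t; cbn; try tauto.
  - lia.
  - intros [H | H]; [apply IHt1 in H | apply IHt2 in H]; lia.
  - intros [H | H]; [apply IHt1 in H | apply IHt2 in H]; lia.
Qed.

Lemma free_in_lt_fbound x f : free_in x f -> x < fbound f.
Proof.
  induction f; cbn; try tauto;
    try (intros [H | H]; first [apply occurs_lt_tbound in H | apply IHf1 in H | apply IHf2 in H]; lia).
  all: intros [_ H]; auto.
Qed.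

Fixpoint alls (xs : list nat) (f : formula) : formula :=
  match xs with
  | [] => f
  | x :: xs' => fAll x (alls xs' f)
  end.

Definition closure (f : formula) : formula := alls (seq 0 (fbound f)) f.

Lemma alls_universal xs f : qfree f -> universal (alls xs f).
Proof. induction xs; cbn; intros; [apply univ_qf | apply univ_all]; auto. Qed.

Lemma free_in_alls x xs f : free_in x (alls xs f) -> ~ In x xs /\ free_in x f.
Proof.
  induction xs as [| y xs IH]; cbn; auto.
  intros [Hxy Hx]; destruct (IH Hx); split; auto.
  intros [-> | Hin]; auto.
Qed.

Lemma closure_sentence f : sentence (closure f).
Proof.
  intros x Hx; apply free_in_alls in Hx as [Hnotin Hx].
  apply Hnotin, in_seq; apply free_in_lt_fbound in Hx; lia.
Qed.

Lemma upd_id {K : Type} (v : nat -> K) x : upd v x (v x) = v.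
Proof.
  apply functional_extensionality; intros y; unfold upd.
  destruct (Nat.eqb_spec y x); congruence.
Qed.

Lemma sat_alls_intro K xs f v : (forall w, sat K w f) -> sat K v (alls xs f).
Proof. revert v; induction xs; cbn; auto. Qed.

Lemma sat_alls_elim K xs f v : sat K v (alls xs f) -> sat K v f.
Proof.
  revert v; induction xs as [| x xs IH]; cbn; auto.
  intros v H; specialize (H (v x)); rewrite upd_id in H; auto.
Qed.

Lemma qfree_sat_transfer (M : LAStructure) f (e : nat -> M) :
  models_univ_th_N M -> qfree f -> sat M e f -> exists w, sat NatStr w f.
Proof.
  intros HM Hqf He.
  apply NNPP; intros Hnone.
  assert (HN : models NatStr (closure (fNot f))).
  { intros v; apply sat_alls_intro; intros w Hw; eauto. }
  apply HM in HN.
  - exact (sat_alls_elim M _ _ e (HN e) He).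
  - apply alls_universal; exact Hqf.
  - apply closure_sentence.
Qed.

Lemma qfree_diagram (K : LAStructure) (e : nat -> K) fs :
  (forall f, In f fs -> qfree f) ->
  exists g, qfree g /\ sat K e g /\
    forall (K' : LAStructure) (w : nat -> K'), sat K' w g ->
      forall f, In f fs -> (sat K e f <-> sat K' w f).
Proof.
  induction fs as [| f fs IH]; intros Hqf.
  - exists (fNot fFalse); cbn; intuition.
  - destruct IH as [g [Hg [Heg Hdiag]]]; [intros; apply Hqf; cbn; auto |].
    assert (Hf : qfree f) by (apply Hqf; cbn; auto).
    destruct (classic (sat K e f)) as [Hef | Hef].
    + exists (fAnd f g); cbn; split; [auto | split; [auto |]].
      intros K' w [Hwf Hwg] f' [<- | Hin]; [tauto | auto].
    + exists (fAnd (fNot f) g); cbn; split; [auto | split; [auto |]].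
      intros K' w [Hwf Hwg] f' [<- | Hin]; [tauto | auto].
Qed.

Lemma qfree_diagram_realized_in_N (M : LAStructure) (e : nat -> M) fs :
  models_univ_th_N M -> (forall f, In f fs -> qfree f) ->
  exists w, forall f, In f fs -> (sat M e f <-> sat NatStr w f).
Proof.
  intros HM Hqf.
  destruct (qfree_diagram M e fs Hqf) as [g [Hg [Heg Hdiag]]].
  destruct (qfree_sat_transfer M g e HM Hg Heg) as [w Hw].
  exists w; exact (Hdiag NatStr w Hw).
Qed.

Definition basic_atoms (i j k : nat) : list formula :=
  [fEq (tvar i) (tvar j); fLe (tvar i) (tvar j);
   fEq (tvar i) tzero; fEq (tvar i) tone;
   fEq (tvar k) (tadd (tvar i) (tvar j)); fEq (tvar k) (tmul (tvar i) (tvar j))].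

Definition atoms (n : nat) : list formula :=
  flat_map (fun i => flat_map (fun j => flat_map (fun k => basic_atoms i j k)
    (seq 0 n)) (seq 0 n)) (seq 0 n).

Lemma basic_atoms_in_atoms n i j k f :
  i < n -> j < n -> k < n -> In f (basic_atoms i j k) -> In f (atoms n).
Proof.
  intros Hi Hj Hk Hf; unfold atoms.
  apply in_flat_map; exists i; split; [apply in_seq; lia |].
  apply in_flat_map; exists j; split; [apply in_seq; lia |].
  apply in_flat_map; exists k; split; [apply in_seq; lia | exact Hf].
Qed.

Lemma atoms_qfree n f : In f (atoms n) -> qfree f.
Proof.
  unfold atoms; intros Hf.
  apply in_flat_map in Hf as [i [_ Hf]].
  apply in_flat_map in Hf as [j [_ Hf]].
  apply in_flat_map in Hf as [k [_ Hf]].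
  cbn in Hf; intuition (subst; cbn; auto).
Qed.

Lemma countable_enumeration (M : LAStructure) :
  countable M -> exists (e : nat -> M) (enc : M -> nat), forall a, e (enc a) = a.
Proof.
  intros [enc Henc].
  exists (fun k => epsilon (inhabits (s_zero M)) (fun a => enc a = k)), enc.
  intros a; apply Henc.
  exact (epsilon_spec (inhabits (s_zero M)) (fun b => enc b = enc a) (ex_intro _ a eq_refl)).
Qed.

Lemma cofinitely_and P Q :
  cofinitely P -> cofinitely Q -> cofinitely (fun n => P n /\ Q n).
Proof.
  intros [N HP] [N' HQ]; exists (N + N'); intros n Hn; split;
    [apply HP | apply HQ]; lia.
Qed.

Section DiagramEmbedding.

Variable M : LAStructure.
Variables (e : nat -> M) (enc : M -> nat).
Hypothesis e_enc : forall a, e (enc a) = a.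
Variable w : nat -> nat -> nat.
Hypothesis w_realizes :
  forall n f, In f (atoms n) -> (sat M e f <-> sat NatStr (w n) f).

Lemma basic_atom_eventually i j k f : In f (basic_atoms i j k) ->
  cofinitely (fun n => sat M e f <-> sat NatStr (w n) f).
Proof.
  intros Hf; exists (S (i + j + k)); intros n Hn.
  apply w_realizes, (basic_atoms_in_atoms n i j k); auto; lia.
Qed.

Lemma basic_atom_true i j k f : In f (basic_atoms i j k) ->
  sat M e f -> cofinitely (fun n => sat NatStr (w n) f).
Proof.
  intros Hf He; destruct (basic_atom_eventually i j k f Hf) as [N HN].
  exists N; intros n Hn; apply HN; auto.
Qed.

Lemma basic_atom_reflect i j k f : In f (basic_atoms i j k) ->
  cofinitely (fun n => sat NatStr (w n) f) -> sat M e f.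
Proof.
  intros Hf Hw.
  destruct (cofinitely_and _ _ Hw (basic_atom_eventually i j k f Hf)) as [N HN].
  destruct (HN N (le_n N)) as [HwN Hiff]; apply Hiff, HwN.
Qed.

Lemma diagram_embedding : embeds_into_reduced_power M.
Proof.
  exists (fun a n => w n (enc a)).
  repeat split.
  - intros a b Hab.
    rewrite <- (e_enc a), <- (e_enc b).
    apply (basic_atom_reflect (enc a) (enc b) 0 (fEq (tvar (enc a)) (tvar (enc b))));
      cbn; auto.
  - apply (basic_atom_true (enc (s_zero M)) 0 0 (fEq (tvar (enc (s_zero M))) tzero));
      cbn; auto 6.
  - apply (basic_atom_true (enc (s_one M)) 0 0 (fEq (tvar (enc (s_one M))) tone));
      cbn; auto 6.
  - intros a b.
    apply (basic_atom_true (enc a) (enc b) (enc (s_add M a b))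
      (fEq (tvar (enc (s_add M a b))) (tadd (tvar (enc a)) (tvar (enc b)))));
      cbn; [auto 8 | now rewrite !e_enc].
  - intros a b.
    apply (basic_atom_true (enc a) (enc b) (enc (s_mul M a b))
      (fEq (tvar (enc (s_mul M a b))) (tmul (tvar (enc a)) (tvar (enc b)))));
      cbn; [auto 8 | now rewrite !e_enc].
  - intros Hab.
    apply (basic_atom_true (enc a) (enc b) 0 (fLe (tvar (enc a)) (tvar (enc b))));
      cbn; [auto | now rewrite !e_enc].
  - intros Hab.
    rewrite <- (e_enc a), <- (e_enc b).
    apply (basic_atom_reflect (enc a) (enc b) 0 (fLe (tvar (enc a)) (tvar (enc b))));
      cbn; auto.
Qed.

End DiagramEmbedding.

Theorem mainTheorem3 (M : LAStructure) :
  countable M -> models_univ_th_N M -> embeds_into_reduced_power M.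
Proof.
  intros Hcount HM.
  destruct (countable_enumeration M Hcount) as [e [enc e_enc]].
  destruct (choice (fun n (wn : nat -> nat) =>
              forall f, In f (atoms n) -> (sat M e f <-> sat NatStr wn f)))
    as [w Hw].
  { intros n; apply qfree_diagram_realized_in_N; [exact HM | apply atoms_qfree]. }
  exact (diagram_embedding M e enc e_enc w Hw).
Qed.
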